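(* Let $Q$ be a finite closed down set of pairs with parameters $p,q,k$, $I_0,\dots,I_{k-1}$, $II_1,\dots,II_k$ as described in the context. Then $$\sum_{j=1}^k II_j=p\qquad\text{and}\qquad \sum_{j=0}^{k-1}I_j=q-p.$$
   Context: Let $c_1,c_2,\dots$ and $s_1,s_2,\dots$ be distinct vertices, and let $Q$ be a finite set of pairs $c_as_b$ that is closed down: $c_as_b\in Q$ implies $c_{a'}s_{b'}\in Q$ for all $a'\le a$, $b'\le b$. Write $[i]\times[j]=\{c_as_b:a\le i,b\le j\}$, and let $\nu(\ell,Q)$ be the matching number of the bipartite graph with sides $\{c_1,\dots,c_\ell\},\{s_1,\dots,s_\ell\}$ and edge set $([\ell]\times[\ell])\setminus Q$. Let $p\ge0$ be the largest integer with $[p]\times[p]\subseteq Q$, and $q\ge0$ the least integer such that $\nu(\ell,Q)=\ell$ for all $\ell\ge p+q$. For every $\ell>p$ one has $\nu(\ell,Q)-\nu(\ell-1,Q)\in\{1,2\}$. The integer interval $(p,p+q]$ is divided, in increasing order, into consecutive left-open right-closed integer intervals $\mathcal O_0,\mathcal T_1,\mathcal O_1,\dots,\mathcal O_{k-1},\mathcal T_k$ such that the increment $\nu(\ell,Q)-\nu(\ell-1,Q)$ is $1$ for $\ell$ in each $\mathcal O_j$ and $2$ for $\ell$ in each $\mathcal T_j$; all intervals except possibly $\mathcal O_0$ are nonempty and the last one is $\mathcal T_k$. Set $I_j=|\mathcal O_j|$ and $II_j=|\mathcal T_j|$. *)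

From mathcomp Require Import all_boot all_order.
Set Implicit Arguments. Unset Strict Implicit. Unset Printing Implicit Defensive.

(* Q is a finite set of pairs (a,b), standing for c_a s_b, with a,b >= 1. *)

Definition closed_down (Q : seq (nat * nat)) : Prop :=
  forall a b a' b', (a, b) \in Q -> 1 <= a' <= a -> 1 <= b' <= b -> (a', b') \in Q.

Definition box_sub (i j : nat) (Q : seq (nat * nat)) : Prop :=
  forall a b, 1 <= a <= i -> 1 <= b <= j -> (a, b) \in Q.

(* bipartite graph on {c_1..c_l},{s_1..s_l}; vertex index i : 'I_l stands
   for c_(i+1) (resp. s_(i+1)); edge set ([l]x[l]) \ Q *)
Definition edgeQ (Q : seq (nat * nat)) (l : nat) (e : 'I_l * 'I_l) : bool :=
  (e.1.+1, e.2.+1) \notin Q.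

Definition is_matching (Q : seq (nat * nat)) (l : nat) (M : {set 'I_l * 'I_l}) : bool :=
  [forall e in M, edgeQ Q e] &&
  [forall e in M, forall f in M, (e != f) ==> ((e.1 != f.1) && (e.2 != f.2))].

Definition nu (Q : seq (nat * nat)) (l : nat) : nat :=
  \max_(M : {set 'I_l * 'I_l} | is_matching Q M) #|M|.

From mathcomp Require Import all_boot.
From mathcomp Require Import zify.

(* Telescoping: [nu Q p = 0] because every edge of the graph on [[p]x[p]]
   lies in [Q], and [nu Q (p + q) = p + q].  So the [q] increments over
   [(p, p + q]] add up to [p + q]; as [sum I] of them equal 1 and [sum II]
   of them equal 2, this gives [sum I + sum II = q] and
   [sum I + 2 sum II = p + q]. *)

Definition runs (a b : nat) (I II : nat -> nat) (k : nat) : seq nat :=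
  flatten [seq nseq (I j) a ++ nseq (II j.+1) b | j <- iota 0 k].

Lemma size_runs a b I II k :
  size (runs a b I II k) = \sum_(0 <= j < k) I j + \sum_(0 <= j < k) II j.+1.
Proof.
rewrite /runs size_flatten /shape -map_comp sumnE big_map -big_split /index_iota subn0.
by apply: eq_bigr => j _; rewrite /= size_cat !size_nseq.
Qed.

Lemma sumn_runs a b I II k :
  sumn (runs a b I II k) =
    a * \sum_(0 <= j < k) I j + b * \sum_(0 <= j < k) II j.+1.
Proof.
rewrite /runs sumn_flatten -map_comp sumnE big_map !big_distrr -big_split /index_iota subn0.
by apply: eq_bigr => j _; rewrite /= sumn_cat !sumn_nseq.
Qed.

Lemma runs_pos a b I II k :
  0 < a -> 0 < b -> all (fun d => 0 < d) (runs a b I II k).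
Proof.
move=> a_gt0 b_gt0; apply/allP=> d /flattenP [s /mapP [j _ ->]].
by rewrite mem_cat => /orP [] /nseqP [-> _].
Qed.

(* Positivity of the increments rules out truncated subtraction. *)
Lemma sumn_increments (f : nat -> nat) n m :
  all (fun d => 0 < d) [seq f l - f l.-1 | l <- iota n.+1 m] ->
  f n + sumn [seq f l - f l.-1 | l <- iota n.+1 m] = f (n + m).
Proof.
elim: m n => [|m IHm] n /=; first by rewrite !addn0.
case/andP=> incr_pos /IHm; rewrite addSnnS => <-; lia.
Qed.

Lemma nu_box_sub Q l : box_sub l l Q -> nu Q l = 0.
Proof.
move=> boxQ; apply/eqP; rewrite -leqn0; apply/bigmax_leqP=> M.
case/andP=> /forallP M_edges _; rewrite leqn0 cards_eq0; apply/eqP/setP=> e.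
rewrite inE; apply/negbTE/negP=> Me; move: (M_edges e); rewrite Me /edgeQ.
by rewrite boxQ //= ltn_ord.
Qed.

Theorem corollary3 (Q : seq (nat * nat)) (p q k : nat) (I II : nat -> nat) :
  (forall a b, (a, b) \in Q -> (0 < a) && (0 < b)) ->
  closed_down Q ->
  (* p is the largest integer with [p]x[p] in Q *)
  box_sub p p Q -> (forall p', box_sub p' p' Q -> p' <= p) ->
  (* q is the least integer with nu(l,Q) = l for all l >= p+q *)
  (forall l, p + q <= l -> nu Q l = l) ->
  (forall q', (forall l, p + q' <= l -> nu Q l = l) -> q <= q') ->
  (* decomposition of (p,p+q] into O_0,T_1,O_1,...,O_(k-1),T_k with
     |O_j| = I j, |T_j| = II j *)
  [seq nu Q l - nu Q l.-1 | l <- iota p.+1 q] =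
    flatten [seq nseq (I j) 1 ++ nseq (II j.+1) 2 | j <- iota 0 k] ->
  (forall j, 1 <= j < k -> 0 < I j) ->
  (forall j, 1 <= j <= k -> 0 < II j) ->
  \sum_(1 <= j < k.+1) II j = p /\ \sum_(0 <= j < k) I j = q - p.
Proof.
move=> _ _ boxQ _ nuQ_full _ incrE _ _.
have incr_pos : all (fun d => 0 < d) [seq nu Q l - nu Q l.-1 | l <- iota p.+1 q].
  by rewrite incrE runs_pos.
have := sumn_increments (nu Q) p q incr_pos.
rewrite incrE nu_box_sub // nuQ_full // sumn_runs => sum_incr.
have size_incr := congr1 size incrE.
rewrite size_map size_iota size_runs in size_incr.
rewrite big_add1 /=.
lia.
Qed.
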